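(* Let $(G,t)$ be an infinite biosphere and let $S_1,S_2\subseteq G$ be infinite specieslike clusters. If $\mathrm{gen}(S_1)\cap\mathrm{gen}(S_2)$ is infinite, then $S_1\sim S_2$, i.e., the symmetric difference $\mathrm{gen}(S_1)\triangle\mathrm{gen}(S_2)$ is finite.
   Context: An infinite biosphere is a directed graph $G$ together with a function $t$ assigning a real number $t(v)$ (the birthdate) to each vertex $v$ of $G$, such that: (1) whenever there is an edge from $v$ to $w$ ($v$ is a parent of $w$, $w$ a child of $v$), $t(v)<t(w)$; (2) for every $r\in\mathbb R$, at most finitely many vertices $v$ have $t(v)<r$; (3) every vertex has at most finitely many children; (4) $G$ has infinitely many vertices. Subsets of $G$ are sets of vertices with the induced edges. $v$ is an ancestor of $w$ (and $w$ a descendant of $v$) if there is a sequence $v=v_1,\dots,v_n=w$ with $n>1$ such that each $v_i$ is a parent of $v_{i+1}$. A set $S\subseteq G$ satisfies the identical ancestor point axiom if there is no $v\in S$ such that $S$ contains both infinitely many descendants of $v$ and infinitely many non-descendants of $v$. $S$ satisfies the convexity axiom if for every $v\in G$, if $v$ has an ancestor in $S$ and a descendant in $S$, then $v\in S$. A specieslike cluster is a subset $S\subseteq G$ that is connected (as an undirected graph, with the induced edges), satisfies the identical ancestor point axiom, and satisfies the convexity axiom. A vertex $v\in S$ is a generator of $S$ if $S$ contains at most finitely many non-descendants of $v$; $\mathrm{gen}(S)$ is the set of generators of $S$. For infinite $S_1,S_2\subseteq G$, $S_1\sim S_2$ means $\mathrm{gen}(S_1)\triangle\mathrm{gen}(S_2)$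 is finite. *)

From Stdlib Require Import Reals List Relations.
Open Scope R_scope.

Section Bio.
Variable V : Type.

Definition finite_set (P : V -> Prop) : Prop :=
  exists l : list V, forall v, P v -> In v l.
Definition infinite_set (P : V -> Prop) : Prop := ~ finite_set P.

(* An infinite biosphere: directed graph (edge relation E) with birthdates t. *)
Definition biosphere (E : V -> V -> Prop) (t : V -> R) : Prop :=
  (forall v w, E v w -> t v < t w) /\
  (forall r : R, finite_set (fun v => t v < r)) /\
  (forall v, finite_set (fun w => E v w)) /\
  infinite_set (fun _ => True).

Definition descendant (E : V -> V -> Prop) (v w : V) : Prop :=
  clos_trans V E v w.

Definition connected_set (E : V -> V -> Prop) (S : V -> Prop) : Prop :=
  forall x y, S x -> S y ->
    clos_refl_trans V (fun a b => S a /\ S b /\ (E a b \/ E b a)) x y.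

Definition identical_ancestor_point_axiom (E : V -> V -> Prop) (S : V -> Prop) : Prop :=
  ~ (exists v, S v /\
        infinite_set (fun w => S w /\ descendant E v w) /\
        infinite_set (fun w => S w /\ ~ descendant E v w)).

Definition convexity_axiom (E : V -> V -> Prop) (S : V -> Prop) : Prop :=
  forall v, (exists a, S a /\ descendant E a v) ->
            (exists d, S d /\ descendant E v d) -> S v.

Definition specieslike_cluster (E : V -> V -> Prop) (S : V -> Prop) : Prop :=
  connected_set E S /\ identical_ancestor_point_axiom E S /\ convexity_axiom E S.

Definition gen (E : V -> V -> Prop) (S : V -> Prop) (v : V) : Prop :=
  S v /\ finite_set (fun w => S w /\ ~ descendant E v w).

Definition sim (E : V -> V -> Prop) (S1 S2 : V -> Prop) : Prop :=
  finite_set (fun v => (gen E S1 v /\ ~ gen E S2 v) \/ (gen E S2 v /\ ~ gen E S1 v)).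

End Bio.

From Stdlib Require Import Reals List Relations Classical.
Open Scope R_scope.

(* Fix a common generator g of S1 and S2.  A generator v of S1 that is not a
   descendant of g is one of the finitely many non-descendants of g in S1.  If
   v is a descendant of g, then, since v has only finitely many
   non-descendants in S1 while the common generators are infinitely many, some
   common generator c descends from v.  Convexity of S2 along g -> v -> c puts
   v in S2, and every non-descendant of v in S2 is a non-descendant of c, so v
   generates S2.  Hence gen(S1) \ gen(S2) is finite, and symmetrically. *)

Section FiniteSets.
Variable V : Type.

Lemma finite_set_sub (P Q : V -> Prop) :
  finite_set V Q -> (forall x, P x -> Q x) -> finite_set V P.
Proof. intros [l Hl] HPQ. exists l. auto. Qed.

Lemma infinite_set_sup (P Q : V -> Prop) :
  infinite_set V P -> (forall x, P x -> Q x) -> infinite_set V Q.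
Proof. intros HP HPQ HQ. exact (HP (finite_set_sub P Q HQ HPQ)). Qed.

Lemma finite_set_or (P Q : V -> Prop) :
  finite_set V P -> finite_set V Q -> finite_set V (fun x => P x \/ Q x).
Proof.
  intros [l1 H1] [l2 H2]. exists (l1 ++ l2).
  intros v [Hv | Hv]; apply in_or_app; auto.
Qed.

Lemma infinite_set_diff_finite (P Q : V -> Prop) :
  infinite_set V P -> finite_set V Q -> exists x, P x /\ ~ Q x.
Proof.
  intros HP HQ. apply NNPP. intro Hnone. apply HP.
  apply (finite_set_sub P Q HQ). intros x Px.
  apply NNPP. intro nQx. apply Hnone. eauto.
Qed.

Lemma infinite_set_inhabited (P : V -> Prop) :
  infinite_set V P -> exists x, P x.
Proof.
  intro HP. destruct (infinite_set_diff_finite P (fun _ => False) HP) as [x [Px _]].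
  - exists nil. intros v [].
  - eauto.
Qed.

End FiniteSets.

Section Generators.
Variables (V : Type) (E : V -> V -> Prop).

Lemma gen_descendant_exists (S P : V -> Prop) (v : V) :
  gen V E S v -> infinite_set V (fun c => S c /\ P c) ->
  exists c, P c /\ descendant V E v c.
Proof.
  intros [_ Hfin] Hinf.
  destruct (infinite_set_diff_finite V _ _ Hinf Hfin) as [c [[Sc Pc] Hc]].
  exists c. split; [exact Pc |].
  apply NNPP. intro Hnd. exact (Hc (conj Sc Hnd)).
Qed.

Lemma gen_between (S : V -> Prop) (g v c : V) :
  convexity_axiom V E S -> S g -> descendant V E g v ->
  descendant V E v c -> gen V E S c -> gen V E S v.
Proof.
  intros Hconv Sg Hgv Hvc [Sc Hfin]. split.
  - apply Hconv; eauto.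
  - apply (finite_set_sub V _ _ Hfin). intros w [Sw Hvw]. split; [exact Sw |].
    intro Hcw. exact (Hvw (t_trans V E v c w Hvc Hcw)).
Qed.

Lemma gen_diff_finite (S1 S2 : V -> Prop) :
  convexity_axiom V E S2 ->
  infinite_set V (fun v => gen V E S1 v /\ gen V E S2 v) ->
  finite_set V (fun v => gen V E S1 v /\ ~ gen V E S2 v).
Proof.
  intros Hconv Hcommon.
  destruct (infinite_set_inhabited V _ Hcommon) as [g [[_ Hg1] [Sg2 _]]].
  apply (finite_set_sub V _ _ Hg1). intros v [Hv1 Hv2].
  split; [exact (proj1 Hv1) |]. intro Hgv. apply Hv2.
  destruct (gen_descendant_exists S1 (gen V E S2) v Hv1) as [c [Hc2 Hvc]].
  - apply (infinite_set_sup V _ _ Hcommon). intros x [[Sx _] Hx2]. auto.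
  - exact (gen_between S2 g v c Hconv Sg2 Hgv Hvc Hc2).
Qed.

End Generators.

Theorem mainTheorem2 (V : Type) (E : V -> V -> Prop) (t : V -> R)
  (HG : biosphere V E t) (S1 S2 : V -> Prop)
  (HS1inf : infinite_set V S1) (HS2inf : infinite_set V S2)
  (HS1 : specieslike_cluster V E S1) (HS2 : specieslike_cluster V E S2)
  (Hgen : infinite_set V (fun v => gen V E S1 v /\ gen V E S2 v)) :
  sim V E S1 S2.
Proof.
  destruct HS1 as [_ [_ Hconv1]]. destruct HS2 as [_ [_ Hconv2]].
  apply finite_set_or.
  - exact (gen_diff_finite V E S1 S2 Hconv2 Hgen).
  - apply (gen_diff_finite V E S2 S1 Hconv1).
    apply (infinite_set_sup V _ _ Hgen). tauto.
Qed.
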